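(* Let $d\ge 7$ and let $G$ be a $d$-regular graph with girth $5$. Suppose there exists a vertex $x\in V(G)$, with neighbors $x_1,\dots,x_d$, and two distinct indices $i\ne j$ in $[d]$ such that every neighbor of every vertex of $X_i\cup X_j$ lies in $N_2(x)$ (equivalently, no vertex of $X_i\cup X_j$ has a neighbor at distance $3$ from $x$). Then $\chi_b(G)=d+1$.
   Context: $X_t=N(x_t)\setminus\{x\}$ is the $t$-th bunch of $x$. $N_2(x)=N(x)\cup S_2(x)$, where $S_2(x)$ is the set of vertices at distance exactly $2$ from $x$. A proper $k$-coloring is a b-coloring if every color class contains a vertex whose closed neighborhood contains all $k$ colors; $\chi_b(G)$ is the largest $k$ for which $G$ has a b-coloring with $k$ colors. *)

From mathcomp Require Import all_boot.
Set Implicit Arguments. Unset Strict Implicit. Unset Printing Implicit Defensive.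

Section Graphs.
Variable T : finType.
Variable e : rel T.

Definition simple_graph : Prop := irreflexive e /\ symmetric e.

Definition nbhd (x : T) : {set T} := [set y | e x y].

Definition cnbhd (x : T) : {set T} := x |: nbhd x.

Definition regular (d : nat) : Prop := forall v : T, #|nbhd v| = d.

Definition S2 (x : T) : {set T} :=
  [set y | (y != x) && ~~ e x y && [exists z, e x z && e z y]].

Definition N2 (x : T) : {set T} := nbhd x :|: S2 x.

Definition bunch (x xt : T) : {set T} := nbhd xt :\ x.

Definition has_cycle (k : nat) : Prop :=
  3 <= k /\ exists c : 'I_k -> T,
    injective c /\ forall i : 'I_k, e (c i) (c (ordS i)).

Definition girth_eq (g : nat) : Prop :=
  has_cycle g /\ forall k, k < g -> ~ has_cycle k.

Definition proper_coloring (k : nat) (c : {ffun T -> 'I_k}) : bool :=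
  [forall x, forall y, e x y ==> (c x != c y)].

Definition is_bcoloring (k : nat) (c : {ffun T -> 'I_k}) : bool :=
  proper_coloring c &&
  [forall a : 'I_k, exists v, (c v == a) &&
     [forall b : 'I_k, exists u, (u \in cnbhd v) && (c u == b)]].

Definition b_colorable (k : nat) : bool :=
  [exists c : {ffun T -> 'I_k}, is_bcoloring c].

(* b-chromatic number: largest k admitting a b-colouring with k colours.
   Every colour class of a b-colouring is nonempty, so k <= #|T|. *)
Definition b_chromatic : nat := \max_(k < #|T|.+1 | b_colorable k) k.

End Graphs.

(* The bound chi_b(G) <= d + 1 holds in every d-regular graph: a b-vertex sees
   all colours in its closed neighbourhood. For the converse, girth 5 and the
   hypothesis on X_i and X_j give, by counting, that every vertex of a bunch
   X_a with a <> j has exactly one neighbour in X_j, and that a fixed v0 in X_i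
   has exactly one neighbour in every X_s with s <> i. These matchings yield a
   proper colouring of N[x] and S_2(x), with the d + 1 vertices of N[x_j] as
   colours, which is injective on N[b] for every b in N[x]. Extending it
   greedily makes every vertex of N[x] a b-vertex, and N[x] meets every
   colour. *)

From mathcomp Require Import all_boot zify.
Set Implicit Arguments. Unset Strict Implicit. Unset Printing Implicit Defensive.

Lemma next_neq (T : eqType) (p : seq T) y :
  uniq p -> 1 < size p -> y \in p -> next p y != y.
Proof.
move=> Up Hs Hy; rewrite next_nth Hy.
case: p Up Hs Hy => [//|a p] /= /andP[ap Up] Hs; rewrite inE eq_sym.
case: (eqVneq a y) => [<- _|ay /= yp] /=.
  by apply: contraNneq ap => <-; rewrite mem_nth.
case: (ltnP (index y p).+1 (size p)) => [lt|ge].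
  by rewrite -{2}(nth_index a yp) nth_uniq ?index_mem //; lia.
by rewrite nth_default // eq_sym.
Qed.

Section FiniteSets.
Variable T : finType.

Lemma leq_card_rel (Y Z : {set T}) (R : rel T) :
  (forall y, y \in Y -> exists2 z, z \in Z & R y z) ->
  (forall y y' z, y \in Y -> y' \in Y -> z \in Z -> R y z -> R y' z -> y = y') ->
  #|Y| <= #|Z|.
Proof.
move=> R_total R_inj; pose f y := odflt y [pick z in Z | R y z].
have fP y : y \in Y -> f y \in Z /\ R y (f y).
  move=> Hy; rewrite /f; case: pickP => [z /andP[] //|none].
  by case: (R_total y Hy) => z Hz Ryz; move: (none z); rewrite Hz Ryz.
rewrite -(@card_in_imset _ _ f); last first.
  move=> y y' Hy Hy' E; have [Zy Ry] := fP y Hy; have [_ Ry'] := fP y' Hy'.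
  by apply: (R_inj y y' (f y)) => //; rewrite E.
apply/subset_leq_card/subsetP => _ /imsetP[y Hy ->]; by case: (fP y Hy).
Qed.

Lemma in_inj_setD1 (rT : eqType) (f : T -> rT) (S : {set T}) a :
  {in S :\ a &, injective f} -> {in S :\ a, forall y, f y != f a} ->
  {in S &, injective f}.
Proof.
move=> f_inj f_neq y y' Hy Hy'.
have rest z : z \in S -> z != a -> z \in S :\ a by rewrite !inE => -> ->.
case: (eqVneq y a) => [->|ya]; case: (eqVneq y' a) => [->|y'a] //.
- by move=> E; move: (f_neq y' (rest _ Hy' y'a)); rewrite E eqxx.
- by move=> E; move: (f_neq y (rest _ Hy ya)); rewrite E eqxx.
- by apply: f_inj; apply: rest.
Qed.

Lemma in_inj_card_onto n (S : {set T}) (f : T -> 'I_n) :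
  #|S| = n -> {in S &, injective f} -> forall i, exists2 y, y \in S & f y = i.
Proof.
move=> cardS f_inj i; have : i \in f @: S.
  suff -> : f @: S = [set: 'I_n] by rewrite inE.
  by apply/eqP; rewrite eqEcard subsetT cardsT card_ord card_in_imset // cardS /=.
by case/imsetP => y Hy ->; exists y.
Qed.

Lemma exists_in_inj_ord n (S : {set T}) :
  #|S| = n.+1 -> exists h : T -> 'I_n.+1, {in S &, injective h}.
Proof.
move=> cardS; exists (fun y => inord (index y (enum S))) => y y' Hy Hy' /(congr1 val) /=.
have idx_lt z : z \in S -> index z (enum S) < n.+1.
  by move=> Hz; rewrite -cardS cardE index_mem mem_enum.
rewrite !inordK ?idx_lt // => E.
by rewrite -(nth_index y (_ : y \in enum S)) ?mem_enum // E nth_index ?mem_enum.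
Qed.

End FiniteSets.

Section Graphs.
Variables (T : finType) (e : rel T).
Hypotheses (e_irr : irreflexive e) (e_sym : symmetric e).

Definition proper_on (C : eqType) (D : {set T}) (c : T -> C) :=
  forall u v, u \in D -> v \in D -> e u v -> c u != c v.

Definition nbr_in (Y : {set T}) w := odflt w [pick y in Y | e w y].

Lemma nbr_inP (Y : {set T}) w :
  (exists2 y, y \in Y & e w y) -> nbr_in Y w \in Y /\ e w (nbr_in Y w).
Proof.
case=> y Hy Hwy; rewrite /nbr_in; case: pickP => [z /andP[] //|none].
by move: (none y); rewrite Hy Hwy.
Qed.

Definition ball2 x := cnbhd e x :|: S2 e x.

Lemma cnbhd_sub_ball2 x b y : b \in cnbhd e x -> y \in cnbhd e b -> y \in ball2 x.
Proof.
rewrite /ball2 !inE => /orP[/eqP-> -> //|xb] /orP[/eqP->|b_y]; first by rewrite xb orbT.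
case: (eqVneq y x) => [//|_] /=.
by case: (e x y) => //=; apply/existsP; exists b; rewrite xb.
Qed.

Lemma ball2_cases x z : z \in ball2 x ->
  [\/ z = x, e x z | exists2 a, e x a & (z \in bunch e x a) && ~~ e x z].
Proof.
rewrite !inE -orbA => /or3P[/eqP->|xz|/andP[/andP[zx xz] /existsP[a /andP[xa az]]]].
- by constructor 1.
- by constructor 2.
- by constructor 3; exists a; rewrite // !inE zx az xz.
Qed.

Lemma adj_neq a b : e a b -> a != b.
Proof. by apply: contraTneq => ->; rewrite e_irr. Qed.

Lemma card_cnbhd d v : regular e d -> #|cnbhd e v| = d.+1.
Proof. by move=> reg; rewrite cardsU1 reg inE e_irr. Qed.

Lemma proper_on_extend1 n (D : {set T}) (c : T -> 'I_n) v :
  #|nbhd e v| < n -> v \notin D -> proper_on D c ->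
  exists c' : T -> 'I_n, proper_on (v |: D) c' /\ {in D, c' =1 c}.
Proof.
move=> deg vD c_prop.
have /set0Pn[a] : ~: (c @: nbhd e v) != set0.
  rewrite -card_gt0; have := cardsC (c @: nbhd e v); rewrite card_ord.
  have := leq_imset_card c (nbhd e v); lia.
rewrite inE => a_free; exists (fun y => if y == v then a else c y); split; last first.
  by move=> y Hy; case: eqP => // E; move: vD; rewrite -E Hy.
have col_nbr w : e v w -> a != c w.
  by move=> Hvw; apply: contraNneq a_free => ->; rewrite imset_f // inE.
move=> u w; rewrite !inE.
case: (eqVneq u v) => [->|uv]; case: (eqVneq w v) => [->|wv] //= Hu Hw.
- by rewrite e_irr.
- exact: col_nbr.
- by rewrite e_sym eq_sym; apply: col_nbr.
- exact: c_prop.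
Qed.

Lemma proper_extend n (D : {set T}) (c : T -> 'I_n) :
  (forall v, #|nbhd e v| < n) -> proper_on D c ->
  exists c' : T -> 'I_n, proper_on setT c' /\ {in D, c' =1 c}.
Proof.
move=> deg; move Em : #|~: D| => m; elim: m D c Em => [|m IH] D c Em c_prop.
  move/eqP: Em; rewrite cards_eq0 => /eqP DC.
  have DT : D = setT by rewrite -[D]setCK DC setC0.
  by exists c; split => //; rewrite -DT.
have [v vD] : exists v, v \in ~: D by apply/set0Pn; rewrite -card_gt0 Em.
rewrite inE in vD; have [c1 [c1_prop c1_ext]] := proper_on_extend1 (deg v) vD c_prop.
have card_rest : #|~: (v |: D)| = m.
  have := cardsD1 v (~: D); rewrite setCU inE vD Em setIC -setDE => /eqP.
  by rewrite eqSS => /eqP.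
have [c' [c'_prop c'_ext]] := IH (v |: D) c1 card_rest c1_prop.
by exists c'; split=> // y Hy; rewrite c'_ext ?c1_ext // inE Hy orbT.
Qed.

Lemma b_colorable_le d k : regular e d -> b_colorable e k -> k <= d.+1.
Proof.
move=> reg /existsP[c /andP[_ /forallP b_vert]]; case: k c b_vert => [//|k] c b_vert.
have /existsP[v /andP[_ /forallP all_cols]] := b_vert ord0.
rewrite -(card_cnbhd v reg) -[k.+1]card_ord -cardsT.
apply: leq_trans (leq_imset_card c _); apply/subset_leq_card/subsetP => b _.
by case/existsP: (all_cols b) => u /andP[u_v /eqP <-]; apply: imset_f.
Qed.

Lemma b_colorable_le_card k : b_colorable e k -> k <= #|T|.
Proof.
move=> /existsP[c /andP[_ /forallP b_vert]].
rewrite -[k]card_ord -cardsT -cardsT; apply: leq_trans (leq_imset_card c _).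
apply/subset_leq_card/subsetP => b _.
by case/existsP: (b_vert b) => v /andP[/eqP <- _]; apply: imset_f.
Qed.

Lemma b_chromatic_eq k :
  b_colorable e k -> (forall k', b_colorable e k' -> k' <= k) -> b_chromatic e = k.
Proof.
move=> bk k_max; rewrite /b_chromatic; apply/eqP; rewrite eqn_leq; apply/andP; split.
  by apply/bigmax_leqP => k' /k_max.
have k_lt : k < #|T|.+1 by rewrite ltnS b_colorable_le_card.
exact: (@leq_bigmax_cond _ (fun i : 'I_#|T|.+1 => b_colorable e i) val (Ordinal k_lt)).
Qed.

Lemma b_colorable_of_rainbow d x (c : T -> 'I_d.+1) : regular e d ->
  (forall u v, e u v -> c u != c v) ->
  (forall b, b \in cnbhd e x -> {in cnbhd e b &, injective c}) -> b_colorable e d.+1.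
Proof.
move=> reg c_prop c_inj.
have onto b : b \in cnbhd e x -> forall i, exists2 y, y \in cnbhd e b & c y = i.
  by move=> Hb; apply: in_inj_card_onto; [apply: card_cnbhd | apply: c_inj].
have xx : x \in cnbhd e x by rewrite !inE eqxx.
apply/existsP; exists [ffun v => c v]; apply/andP; split.
  by apply/forallP => u; apply/forallP => v; apply/implyP; rewrite !ffunE; apply: c_prop.
apply/forallP => i; have [b Hb cb] := onto x xx i.
apply/existsP; exists b; rewrite ffunE cb eqxx /=; apply/forallP => i'.
by have [u Hu cu] := onto b Hb i'; apply/existsP; exists u; rewrite Hu ffunE cu eqxx.
Qed.

End Graphs.

Section Girth5.
Variables (T : finType) (e : rel T).
Hypotheses (e_irr : irreflexive e) (e_sym : symmetric e).

Lemma ucycle_has_cycle (s : seq T) :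
  3 <= size s -> uniq s -> cycle e s -> has_cycle e (size s).
Proof.
case: s => [//|a p] Hs Hu /(pathP a) Hc; split=> //.
exists (fun i => nth a (a :: p) i); split.
  by move=> i j /eqP; rewrite nth_uniq // => /eqP /val_inj.
move=> [i /= Hi]; have := Hc i; rewrite size_rcons -rcons_cons !nth_rcons /=.
rewrite Hi /ordS /=; move: Hi; rewrite ltnS leq_eqVlt => /orP[/eqP->|Hi].
  by rewrite ltnn eqxx modnn; apply.
by rewrite Hi modn_small //; apply.
Qed.

Hypotheses (no_C3 : ~ has_cycle e 3) (no_C4 : ~ has_cycle e 4).

Lemma triangle_free a b c : e a b -> e b c -> e c a -> False.
Proof.
move=> ab bc ca; apply: no_C3; apply: (ucycle_has_cycle (s := [:: a; b; c])) => //=.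
  by rewrite !inE negb_or (adj_neq e_irr ab) (adj_neq e_irr bc) eq_sym (adj_neq e_irr ca).
by rewrite ab bc ca.
Qed.

Lemma common_nbr_uniq a b y y' : a != b -> e a y -> e y b -> e a y' -> e y' b -> y = y'.
Proof.
move=> ab ay yb ay' y'b; apply/eqP/negPn/negP => yy'.
apply: no_C4; apply: (ucycle_has_cycle (s := [:: a; y; b; y'])) => //=.
  rewrite !inE !negb_or ab yy' (adj_neq e_irr ay) (adj_neq e_irr ay') (adj_neq e_irr yb).
  by rewrite eq_sym (adj_neq e_irr y'b).
by rewrite ay yb (e_sym b) y'b (e_sym y') ay'.
Qed.

Variables (d : nat) (x : T).
Hypothesis e_reg : regular e d.

Local Notation X t := (bunch e x t).

Lemma in_bunch t w : (w \in X t) = (w != x) && e t w.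
Proof. by rewrite !inE. Qed.

Lemma bunch_nadj t w : e x t -> w \in X t -> ~~ e x w.
Proof.
move=> xt; rewrite in_bunch => /andP[_ tw]; apply/negP => xw.
by apply: (triangle_free xt tw); rewrite e_sym.
Qed.

Lemma bunch_nbr_uniq t w y y' :
  w != t -> y \in X t -> y' \in X t -> e w y -> e w y' -> y = y'.
Proof.
rewrite !in_bunch => wt /andP[_ ty] /andP[_ ty'] wy wy'.
by apply: (common_nbr_uniq (a := t) (b := w)); rewrite // 1?eq_sym // e_sym.
Qed.

Lemma bunch_disjoint a b w : e x a -> e x b -> a != b -> w \in X a -> w \notin X b.
Proof.
rewrite !in_bunch => xa xb ab /andP[wx aw]; rewrite wx /=; apply/negP => bw.
by move: wx; rewrite (common_nbr_uniq ab (_ : e a x) xb aw (_ : e w b)) ?eqxx // e_sym.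
Qed.

Lemma card_bunch t : e x t -> #|X t| = d.-1.
Proof.
by move=> xt; have := cardsD1 x (nbhd e t); rewrite e_reg !inE e_sym xt => ->.
Qed.

Definition N2_closed v := forall u, e v u -> u \in N2 e x.

(* Each neighbour of v other than t0 lies in S_2(x) and has a neighbour in
   N(x) \ {t0}, distinct ones for distinct neighbours since there is no C_4;
   avoiding t would inject d - 1 vertices into d - 2. *)
Lemma N2_closed_nbr_in_bunch t0 t v : e x t0 -> e x t -> t != t0 ->
  v \in X t0 -> N2_closed v -> exists2 w, w \in X t & e v w.
Proof.
move=> xt0 xt tt0 v_t0 v_closed; have v_nadj := bunch_nadj xt0 v_t0.
move: v_t0; rewrite in_bunch => /andP[vx t0v].
case: (boolP [exists w in X t, e v w]) => [/exists_inP //|no_w]; exfalso.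
have : #|nbhd e v :\ t0| <= #|nbhd e x :\ t0 :\ t|.
  apply: (@leq_card_rel _ _ _ (fun y z => e z y)).
    move=> y; rewrite !inE => /andP[yt0 vy].
    have := v_closed y vy; rewrite !inE => /orP[xy|].
      have xv : x != v by rewrite eq_sym.
      by move: yt0; rewrite -(common_nbr_uniq xv xt0 t0v xy) ?eqxx // e_sym.
    case/andP=> /andP[yx _] /existsP[z /andP[xz zy]]; exists z => //.
    rewrite !inE xz andbT; apply/andP; split.
      apply: contraNneq no_w => zt.
      by apply/exists_inP; exists y; rewrite // in_bunch yx -zt.
    apply: contraTneq zy => ->; apply/negP => t0y.
    by apply: (triangle_free t0v vy); rewrite e_sym.
  move=> y y' z; rewrite !inE => /andP[_ vy] /andP[_ vy'] /andP[_ /andP[_ xz]] zy zy'.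
  apply: (common_nbr_uniq (a := v) (b := z)); rewrite // 1?e_sym //.
  by apply: contraNneq v_nadj => ->.
have := cardsD1 t0 (nbhd e v); have := cardsD1 t0 (nbhd e x).
have := cardsD1 t (nbhd e x :\ t0); by rewrite !e_reg !inE tt0 xt xt0 e_sym t0v; lia.
Qed.

(* Otherwise matching each u in X_t with its neighbour in X_a, given by the
   previous lemma, would inject X_t into X_a \ {w}. *)
Lemma nbr_in_N2_closed_bunch t a w : e x t -> e x a -> a != t ->
  {in X t, forall u, N2_closed u} -> w \in X a -> exists2 u, u \in X t & e w u.
Proof.
move=> xt xa a_neq Xt_closed w_a.
case: (boolP [exists u in X t, e w u]) => [/exists_inP //|no_u]; exfalso.
have : #|X t| <= #|X a :\ w|.
  apply: (@leq_card_rel _ _ _ e) => [u u_t|u u' z u_t u'_t].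
    have [z z_a uz] := N2_closed_nbr_in_bunch xt xa a_neq u_t (Xt_closed u u_t).
    exists z => //; rewrite !inE -in_bunch z_a andbT.
    by apply: contraNneq no_u => zw; apply/exists_inP; exists u; rewrite // e_sym -zw.
  rewrite inE => /andP[_ z_a] uz u'z.
  apply: (bunch_nbr_uniq (t := t) (w := z)); rewrite // 1?e_sym //.
  by apply: contraTneq (bunch_nadj xa z_a) => ->; rewrite xt.
by have := cardsD1 w (X a); rewrite w_a !card_bunch //; lia.
Qed.

Section Coloring.
Variables xi xj v0 : T.
Hypotheses (d_ge4 : 4 <= d) (x_xi : e x xi) (x_xj : e x xj) (xi_xj : xi != xj).
Hypotheses (v0_Xi : v0 \in X xi) (v0_closed : N2_closed v0).
Hypothesis Xj_closed : {in X xj, forall u, N2_closed u}.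

Local Notation A := (nbhd e x).
Local Notation Xj := (X xj).

Definition beta w := nbr_in e Xj w.
Definition nbr_v0 s := nbr_in e (X s) v0.
Definition u0 := beta v0.
Definition sigma := next (enum (Xj :\ u0)).

(* Colours are vertices of N[x_j]: a vertex of a bunch X_a, a <> j, gets the
   colour of its neighbour in X_j, or x_j if it is adjacent to v0, while X_j is
   coloured through the fixed-point-free permutation [sigma] of X_j \ u0, so that
   no edge between X_j and another bunch is monochromatic. *)
Definition col z :=
  if z == x then x
  else if z == xi then xj
  else if z == xj then u0
  else if z \in A then beta (nbr_v0 z)
  else if z \in Xj then (if z == u0 then xj else sigma z)
  else if e v0 z then xj else beta z.

Lemma neq_of_nadj z s : ~~ e x z -> e x s -> z != s.
Proof. by move=> xz; apply: contraTneq => <-. Qed.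

Lemma Xj_neq_xj y : y \in Xj -> y != xj.
Proof.
by rewrite in_bunch => /andP[_ xj_y]; apply: contraTneq xj_y => ->; rewrite e_irr.
Qed.

Lemma betaP a w : e x a -> a != xj -> w \in X a -> beta w \in Xj /\ e w (beta w).
Proof. by move=> xa a_xj w_a; apply: nbr_inP; apply: nbr_in_N2_closed_bunch w_a. Qed.

Lemma beta_eq a w u : e x a -> a != xj -> w \in X a -> u \in Xj -> e w u -> beta w = u.
Proof.
move=> xa a_xj w_a u_j wu; have [bj wb] := betaP xa a_xj w_a.
apply: (bunch_nbr_uniq (t := xj) (w := w)) => //.
by apply: neq_of_nadj (bunch_nadj xa w_a) x_xj.
Qed.

Lemma beta_inj a : e x a -> a != xj -> {in X a &, injective beta}.
Proof.
move=> xa a_xj w w' w_a w'_a E; have [bj wb] := betaP xa a_xj w_a.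
have [_] := betaP xa a_xj w'_a; rewrite -E => w'b.
apply: (bunch_nbr_uniq (t := a) (w := beta w)); rewrite // 1?e_sym //.
exact: neq_of_nadj (bunch_nadj x_xj bj) xa.
Qed.

Lemma nbr_v0P s : e x s -> s != xi -> nbr_v0 s \in X s /\ e v0 (nbr_v0 s).
Proof. by move=> xs s_xi; apply: nbr_inP; apply: N2_closed_nbr_in_bunch v0_Xi v0_closed. Qed.

Lemma nbr_v0_eq s z : e x s -> s != xi -> z \in X s -> e v0 z -> z = nbr_v0 s.
Proof.
move=> xs s_xi z_s v0z; have [n_s v0n] := nbr_v0P xs s_xi.
apply: (bunch_nbr_uniq (t := s) (w := v0)) => //.
exact: neq_of_nadj (bunch_nadj x_xi v0_Xi) xs.
Qed.

Lemma u0P : u0 \in Xj /\ e v0 u0.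
Proof. exact: betaP x_xi xi_xj v0_Xi. Qed.

Lemma sigmaP u : u \in Xj -> u != u0 -> [/\ sigma u \in Xj, sigma u != u0 & sigma u != u].
Proof.
move=> u_j u_u0; have u_enum : u \in enum (Xj :\ u0) by rewrite mem_enum in_setD1 u_u0.
have : sigma u \in Xj :\ u0 by rewrite -mem_enum /sigma mem_next.
rewrite in_setD1 => /andP[-> ->]; split=> //.
apply: next_neq u_enum; first exact: enum_uniq.
have := cardsD1 u0 Xj; rewrite -cardE (card_bunch x_xj) (proj1 u0P); lia.
Qed.

Lemma sigma_inj : injective sigma.
Proof. exact: can_inj (prev_next (enum_uniq _)). Qed.

Lemma beta_nbr_v0P s : e x s -> s != xi -> s != xj ->
  beta (nbr_v0 s) \in Xj /\ beta (nbr_v0 s) != u0.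
Proof.
move=> xs s_xi s_xj; have [n_s v0n] := nbr_v0P xs s_xi; have [bj nb] := betaP xs s_xj n_s.
by split=> //; apply/eqP => E; apply: (triangle_free v0n nb); rewrite E e_sym (proj2 u0P).
Qed.

Lemma beta_nbr_v0_inj s s' :
  e x s -> s != xi -> s != xj -> e x s' -> s' != xi -> s' != xj ->
  beta (nbr_v0 s) = beta (nbr_v0 s') -> s = s'.
Proof.
move=> xs s_xi s_xj xs' s'_xi s'_xj E.
have [n_s v0n] := nbr_v0P xs s_xi; have [n'_s' v0n'] := nbr_v0P xs' s'_xi.
have [bj nb] := betaP xs s_xj n_s; have [_ n'b] := betaP xs' s'_xj n'_s'.
have v0_b : v0 != beta (nbr_v0 s).
  by apply: contraNneq (bunch_disjoint x_xi x_xj xi_xj v0_Xi) => ->.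
have En : nbr_v0 s = nbr_v0 s'.
  by apply: (common_nbr_uniq v0_b); rewrite // 1?E // e_sym.
case: (eqVneq s s') => // ss'.
by move: (bunch_disjoint xs xs' ss' n_s); rewrite En n'_s'.
Qed.

Lemma nbr_eq_x s : e x s -> (s == x) = false.
Proof. by move=> xs; rewrite eq_sym; apply/negbTE/(adj_neq e_irr). Qed.

Lemma col_x : col x = x.
Proof. by rewrite /col eqxx. Qed.

Lemma col_xi : col xi = xj.
Proof. by rewrite /col nbr_eq_x // eqxx. Qed.

Lemma col_xj : col xj = u0.
Proof. by rewrite /col nbr_eq_x // eq_sym (negbTE xi_xj) eqxx. Qed.

Lemma col_nbhd s : e x s -> s != xi -> s != xj -> col s = beta (nbr_v0 s).
Proof.
by move=> xs s_xi s_xj; rewrite /col nbr_eq_x // (negbTE s_xi) (negbTE s_xj) inE xs.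
Qed.

Lemma col_nadj z : z != x -> ~~ e x z -> col z =
  if z \in Xj then (if z == u0 then xj else sigma z) else if e v0 z then xj else beta z.
Proof.
move=> zx xz; rewrite /col (negbTE zx) (negbTE (neq_of_nadj xz x_xi)).
by rewrite (negbTE (neq_of_nadj xz x_xj)) inE (negbTE xz).
Qed.

Lemma col_Xj u : u \in Xj -> col u = if u == u0 then xj else sigma u.
Proof.
move=> u_j; move: (u_j); rewrite in_bunch => /andP[ux _].
by rewrite col_nadj ?u_j // (bunch_nadj x_xj u_j).
Qed.

Lemma col_bunch a z : e x a -> a != xj -> z \in X a -> col z = if e v0 z then xj else beta z.
Proof.
move=> xa a_xj z_a; move: (z_a); rewrite in_bunch => /andP[zx _].
by rewrite col_nadj ?(bunch_nadj xa z_a) // (negbTE (bunch_disjoint xa x_xj a_xj z_a)).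
Qed.

Lemma col_Xi z : z \in X xi -> col z = beta z.
Proof.
move=> z_i; rewrite (col_bunch x_xi xi_xj z_i); case: ifP => // v0z; exfalso.
move: z_i v0_Xi; rewrite !in_bunch => /andP[_ xi_z] /andP[_ xi_v0].
by apply: (triangle_free v0z (_ : e z xi)); rewrite // e_sym.
Qed.

Lemma col_nbhd_Xj s : e x s -> s != xi -> col s \in Xj.
Proof.
move=> xs s_xi; case: (eqVneq s xj) => [->|s_xj]; first by rewrite col_xj (proj1 u0P).
by rewrite col_nbhd //; case: (beta_nbr_v0P xs s_xi s_xj).
Qed.

Lemma col_range z : z \in ball2 e x -> z != x -> col z \in xj |: Xj.
Proof.
move=> zB zx; rewrite in_setU1; case: (ball2_cases zB) => [zx'|xz|[a xa /andP[z_a _]]].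
- by rewrite zx' eqxx in zx.
- case: (eqVneq z xi) => [->|z_xi]; first by rewrite col_xi eqxx.
  by rewrite col_nbhd_Xj ?orbT.
- case: (eqVneq a xj) => [a_xj|a_xj].
    subst a; rewrite col_Xj //; case: (eqVneq z u0) => [_|z_u0]; first by rewrite eqxx.
    by case: (sigmaP z_a z_u0) => -> _ _; rewrite orbT.
  rewrite (col_bunch xa a_xj z_a); case: ifP => _; first by rewrite eqxx.
  by rewrite (proj1 (betaP xa a_xj z_a)) orbT.
Qed.

Lemma col_inj_nbhd_x : {in A &, injective col}.
Proof.
apply: (in_inj_setD1 (a := xi)) => [|s]; last first.
  rewrite !inE col_xi => /andP[s_xi xs].
  exact: Xj_neq_xj (col_nbhd_Xj xs s_xi).
apply: (in_inj_setD1 (a := xj)) => [s s'|s]; rewrite !inE.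
  move=> /and3P[s_xj s_xi xs] /and3P[s'_xj s'_xi xs'].
  by rewrite !col_nbhd //; apply: beta_nbr_v0_inj.
move=> /and3P[s_xj s_xi xs]; rewrite col_xj col_nbhd //.
by case: (beta_nbr_v0P xs s_xi s_xj).
Qed.

Lemma col_inj_nbhd_xi : {in cnbhd e xi :\ x &, injective col}.
Proof.
have rest z : z \in cnbhd e xi :\ x :\ xi -> z \in X xi.
  by rewrite !inE => /and3P[/negbTE-> -> //].
apply: (in_inj_setD1 (a := xi)) => [z z' /rest z_i /rest z'_i|z /rest z_i].
  by rewrite !col_Xi //; apply: (beta_inj x_xi xi_xj).
rewrite col_xi col_Xi //.
exact: Xj_neq_xj (proj1 (betaP x_xi xi_xj z_i)).
Qed.

Lemma col_inj_nbhd_xj : {in cnbhd e xj :\ x &, injective col}.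
Proof.
have rest z : z \in cnbhd e xj :\ x :\ xj -> z \in Xj.
  by rewrite !inE => /and3P[/negbTE-> -> //].
have [u0_j _] := u0P.
apply: (in_inj_setD1 (a := xj)) => [|z /rest z_j]; last first.
  rewrite col_xj col_Xj //; case: (eqVneq z u0) => [_|z_u0].
    by rewrite eq_sym Xj_neq_xj.
  by case: (sigmaP z_j z_u0).
apply: (in_inj_setD1 (a := u0)) => [z z'|z].
  move=> /setD1P[z_u0 /rest z_j] /setD1P[z'_u0 /rest z'_j].
  by rewrite !col_Xj // (negbTE z_u0) (negbTE z'_u0); apply: sigma_inj.
move=> /setD1P[z_u0 /rest z_j]; rewrite !col_Xj // eqxx (negbTE z_u0).
by case: (sigmaP z_j z_u0) => /Xj_neq_xj.
Qed.

Lemma col_inj_nbhd s : e x s -> s != xi -> s != xj -> {in cnbhd e s :\ x &, injective col}.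
Proof.
move=> xs s_xi s_xj; have [n_s v0n] := nbr_v0P xs s_xi.
have col_s z : z \in X s -> z != nbr_v0 s -> col z = beta z.
  move=> z_s z_n; rewrite (col_bunch xs s_xj z_s); case: ifP => // v0z.
  by rewrite (nbr_v0_eq xs s_xi z_s v0z) eqxx in z_n.
have rest z : z \in cnbhd e s :\ x -> z != s -> z \in X s.
  by rewrite !inE => /andP[/negbTE-> /orP[/eqP->|->]]; rewrite ?eqxx.
apply: (in_inj_setD1 (a := nbr_v0 s)) => [|z]; last first.
  rewrite (col_bunch xs s_xj n_s) v0n => /setD1P[z_n z_sx].
  have col_zj : col z \in Xj.
    case: (eqVneq z s) => [->|z_s]; first exact: col_nbhd_Xj.
    have z_Xs := rest _ z_sx z_s.
    by rewrite col_s //; case: (betaP xs s_xj z_Xs).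
  exact: Xj_neq_xj col_zj.
apply: (in_inj_setD1 (a := s)) => [z z'|z].
  move=> /setD1P[z_s /setD1P[z_n /rest/(_ z_s) z_Xs]].
  move=> /setD1P[z'_s /setD1P[z'_n /rest/(_ z'_s) z'_Xs]].
  by rewrite !col_s //; apply: (beta_inj xs s_xj).
move=> /setD1P[z_s /setD1P[z_n /rest/(_ z_s) z_Xs]].
rewrite col_s // col_nbhd //; apply: contra_neq z_n.
exact: (beta_inj xs s_xj z_Xs n_s).
Qed.

Lemma col_inj b : b \in cnbhd e x -> {in cnbhd e b &, injective col}.
Proof.
move=> b_x; apply: (in_inj_setD1 (a := x)) => [|y]; last first.
  rewrite col_x => /setD1P[yx b_y].
  have := col_range (cnbhd_sub_ball2 b_x b_y) yx; apply: contraTneq => ->.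
  by rewrite !inE negb_or eqxx /= andbT eq_sym nbr_eq_x.
move: b_x; rewrite !inE => /orP[/eqP->|xb].
  by apply: sub_in2 col_inj_nbhd_x => y; rewrite !inE => /andP[/negbTE->].
case: (eqVneq b xi) => [->|b_xi]; first exact: col_inj_nbhd_xi.
case: (eqVneq b xj) => [->|b_xj]; first exact: col_inj_nbhd_xj.
exact: col_inj_nbhd.
Qed.

Lemma col_proper_Xj_bunch u v b :
  u \in Xj -> e x b -> b != xj -> v \in X b -> e u v -> col u != col v.
Proof.
move=> u_j xb b_xj v_b uv; have [u0_j v0u0] := u0P.
rewrite col_Xj // (col_bunch xb b_xj v_b) (beta_eq xb b_xj v_b u_j); last by rewrite e_sym.
case: (eqVneq u u0) => [Eu|u_u0]; case: ifP => v0v.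
- exfalso; move: uv; rewrite Eu => uv.
  by apply: (triangle_free v0v (_ : e v u0)); rewrite e_sym.
- by rewrite Eu eq_sym Xj_neq_xj.
- by case: (sigmaP u_j u_u0) => /Xj_neq_xj.
- by case: (sigmaP u_j u_u0).
Qed.

Lemma col_proper_bunches u v a b : e x a -> a != xj -> u \in X a ->
  e x b -> b != xj -> v \in X b -> e u v -> col u != col v.
Proof.
move=> xa a_xj u_a xb b_xj v_b uv.
have [bu_j ubu] := betaP xa a_xj u_a; have [bv_j vbv] := betaP xb b_xj v_b.
rewrite (col_bunch xa a_xj u_a) (col_bunch xb b_xj v_b); case: ifP => v0u; case: ifP => v0v.
- by exfalso; apply: (triangle_free v0u uv); rewrite e_sym.
- by rewrite eq_sym Xj_neq_xj.
- exact: Xj_neq_xj.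
- apply/eqP => E; apply: (triangle_free uv (_ : e v (beta u)) (_ : e (beta u) u)).
    by rewrite E.
  by rewrite e_sym.
Qed.

Lemma col_proper : proper_on e (ball2 e x) col.
Proof.
have inj_case y z : y \in cnbhd e x -> e y z -> col y != col z.
  move=> y_x yz; apply: contraNneq (adj_neq e_irr yz) => E.
  by apply/eqP; apply: (col_inj y_x); rewrite // !inE ?eqxx ?yz ?orbT.
move=> u v uB vB uv.
case: (ball2_cases uB) => [u_x|xu|[a xa /andP[u_a xu]]].
- by apply: inj_case uv; rewrite !inE u_x eqxx.
- by apply: inj_case uv; rewrite !inE xu orbT.
case: (ball2_cases vB) => [v_x|xv|[b xb /andP[v_b xv]]].
- by move: xu; rewrite -v_x e_sym uv.
- by rewrite eq_sym; apply: inj_case; rewrite 1?e_sym // !inE xv orbT.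
case: (eqVneq a xj) => [a_xj|a_xj]; case: (eqVneq b xj) => [b_xj|b_xj].
- move: u_a v_b; rewrite a_xj b_xj !in_bunch => /andP[_ xj_u] /andP[_ xj_v].
  by exfalso; apply: (triangle_free xj_u uv); rewrite e_sym.
- by apply: (col_proper_Xj_bunch _ xb); rewrite // -a_xj.
- by rewrite eq_sym; apply: (col_proper_Xj_bunch _ xa); rewrite 1?e_sym // -b_xj.
- exact: (col_proper_bunches xa a_xj u_a xb b_xj v_b).
Qed.

Lemma b_colorable_succ : b_colorable e d.+1.
Proof.
have [h h_inj] := exists_in_inj_ord (card_cnbhd e_irr xj e_reg).
have col_in z : z \in ball2 e x -> col z \in cnbhd e xj.
  move=> zB; case: (eqVneq z x) => [->|zx]; first by rewrite col_x !inE e_sym x_xj orbT.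
  by have := col_range zB zx; rewrite !inE => /orP[->|/andP[_ ->]]; rewrite ?orbT.
have h_col_proper : proper_on e (ball2 e x) (h \o col).
  move=> u v uB vB uv; apply: contraNneq (col_proper uB vB uv) => /h_inj-> //; exact: col_in.
have deg v : #|nbhd e v| < d.+1 by rewrite e_reg.
have [c [c_proper c_ext]] := proper_extend e_irr e_sym deg h_col_proper.
apply: (b_colorable_of_rainbow e_irr e_reg (x := x)).
  by move=> u v; apply: c_proper; rewrite inE.
move=> b b_x y y' y_b y'_b; have sub := cnbhd_sub_ball2 b_x.
rewrite !c_ext ?sub // => /h_inj E; apply: (col_inj b_x) => //.
by apply: E; apply: col_in; apply: sub.
Qed.

End Coloring.

End Girth5.

Theorem mainTheorem8 (T : finType) (e : rel T) (d : nat) :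
  simple_graph e -> 7 <= d -> regular e d -> girth_eq e 5 ->
  (exists x xi xj : T,
     [/\ e x xi, e x xj, xi != xj &
         forall v u, v \in bunch e x xi :|: bunch e x xj -> e v u ->
           u \in N2 e x]) ->
  b_chromatic e = d.+1.
Proof.
move=> [e_irr e_sym] d_ge7 e_reg [_ short_free] [x [xi [xj [x_xi x_xj xi_xj closed]]]].
have [v0 v0_Xi] : exists v0, v0 \in bunch e x xi.
  by apply/set0Pn; rewrite -card_gt0 (card_bunch e_sym e_reg x_xi); lia.
apply: b_chromatic_eq => [|k]; last exact: b_colorable_le.
apply: (b_colorable_succ e_irr e_sym (short_free 3 isT) (short_free 4 isT) e_reg _
  x_xi x_xj xi_xj v0_Xi).
- by lia.
- by move=> u; apply: closed; rewrite inE v0_Xi.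
- by move=> w w_j u; apply: closed; rewrite inE w_j orbT.
Qed.
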